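(* Let $M\subset\mathbb{R}^m$ be a polyhedral complex and $f:|M|\to\mathbb{R}^n$ a piecewise-linear map which is affine on each cell of $M$. Let $N$ be a polyhedral complex embedded in $\mathbb{R}^n$. Suppose $f$ is transverse on cells of $M$ to the interior of every cell of $N$. If $C\le C'$ is a face relation in $M$, $D\le D'$ is a face relation in $N$, and $f(C^\circ)\cap D$ is nonempty, then $f(C'^\circ)\cap D'^\circ$ is nonempty.
   Context: Polyhedra are intersections of finitely many closed half-spaces (possibly unbounded); $P^\circ$ denotes the interior of $P$ relative to its affine span (a point is its own interior). $C\le C'$ means $C$ is a face of $C'$ or equal to it. A polyhedral complex is a finite set of polyhedra closed under taking faces such that any two members intersect in a common face; $|M|$ is the union of its cells. A map $f$ affine on each cell of $M$ is transverse on cells of $M$ to a smooth submanifold $Z$ (without boundary) if for every cell $C$ of $M$, the restriction $f|_{C^\circ}$ is transverse to $Z$, i.e. for every $x\in C^\circ$ with $f(x)\in Z$, $df(T_xC^\circ)+T_{f(x)}Z=\mathbb{R}^n$. *)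

From mathcomp Require Import all_boot all_order all_algebra.
From mathcomp Require Import boolp classical_sets cardinality reals.
Set Implicit Arguments. Unset Strict Implicit. Unset Printing Implicit Defensive.
Import Order.TTheory GRing.Theory Num.Theory.
Local Open Scope ring_scope.
Local Open Scope classical_set_scope.

Section Polyhedra.
Variable R : realType.

Definition dotv k (a x : 'rV[R]_k) : R := \sum_(i < k) a 0 i * x 0 i.

Definition halfspace k (a : 'rV[R]_k) (b : R) : set 'rV[R]_k :=
  [set x | dotv a x <= b].

Definition polyhedron k (P : set 'rV[R]_k) : Prop :=
  exists s : seq ('rV[R]_k * R),
    P = [set x | forall h, h \in s -> dotv h.1 x <= h.2].

(* F is a face of P or equal to P (F <= P): F is the intersection of P with
   a supporting hyperplane {a.x = b} where a.x <= b on P.  a = 0, b = 0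
   gives P itself; a = 0, b = 1 gives the empty face. *)
Definition face k (F P : set 'rV[R]_k) : Prop :=
  exists (a : 'rV[R]_k) (b : R),
    (forall x, P x -> dotv a x <= b) /\ F = P `&` [set x | dotv a x = b].

Definition dir k (P : set 'rV[R]_k) : set 'rV[R]_k :=
  [set v | exists s : seq (R * 'rV[R]_k * 'rV[R]_k),
     (forall t, t \in s -> P t.1.2 /\ P t.2) /\
     v = \sum_(t <- s) t.1.1 *: (t.1.2 - t.2)].

Definition aff k (P : set 'rV[R]_k) : set 'rV[R]_k :=
  [set y | exists x v, P x /\ dir P v /\ y = x + v].

Definition sqdist k (x y : 'rV[R]_k) : R := \sum_(i < k) (x 0 i - y 0 i) ^+ 2.

Definition relint k (P : set 'rV[R]_k) : set 'rV[R]_k :=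
  [set x | P x /\ exists e : R, 0 < e /\
     forall y, aff P y -> sqdist y x < e -> P y].

Definition polyhedral_complex k (M : set (set 'rV[R]_k)) : Prop :=
  finite_set M /\
  (forall C, M C -> polyhedron C) /\
  (forall C F, M C -> face F C -> F !=set0 -> M F) /\
  (forall C C', M C -> M C' -> face (C `&` C') C /\ face (C `&` C') C').

Definition support k (M : set (set 'rV[R]_k)) : set 'rV[R]_k :=
  \bigcup_(C in M) C.

Definition affine_on_cells m n (M : set (set 'rV[R]_m))
    (f : 'rV[R]_m -> 'rV[R]_n) : Prop :=
  forall C, M C -> exists (A : 'M[R]_(m, n)) (b : 'rV[R]_n),
    forall x, C x -> f x = x *m A + b.

(* f is transverse on cells of M to the interior D° of the polyhedron D:
   for every cell C of M and x in C° with f x in D°,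
   df(T_x C°) + T_{f x} D° = R^n.  Here T_x C° = dir C, T D° = dir D, and
   df on T_x C° is v |-> v *m A for any affine representation
   f = (x |-> x *m A + b) on C. *)
Definition transverse_on_cells m n (M : set (set 'rV[R]_m))
    (f : 'rV[R]_m -> 'rV[R]_n) (D : set 'rV[R]_n) : Prop :=
  forall C, M C -> forall x, relint C x -> relint D (f x) ->
    forall (A : 'M[R]_(m, n)) (b : 'rV[R]_n),
      (forall y, C y -> f y = y *m A + b) ->
      forall w : 'rV[R]_n, exists u v, dir C u /\ dir D v /\ w = u *m A + v.

End Polyhedra.

(* The affine map f is x |-> x A + b on C'.  Take x in C° with f x in D, and
   let F be the face of D with f x in F°.  Transversality at x writes the
   vector from f y0 to z0, for interior points y0 of C' and z0 of D', as
   u A + v with u a direction of C and v a direction of F.  For small s > 0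
   the points x + s u and f x - s v stay in C and F, and f (x + s u) differs
   from f x - s v by s (z0 - f y0); so the point of the segment from x + s u
   to y0 with parameter t = s / (1 + s) is mapped to the point of the segment
   from f x - s v to z0 with the same parameter.  Both points lie in the
   relative interiors of C' and D', since a segment from a point of a convex
   set to a relative interior point stays in the relative interior. *)
From HB Require Import structures.
From mathcomp Require Import all_boot all_order all_algebra.
From mathcomp Require Import boolp classical_sets cardinality reals.
From mathcomp Require Import ring lra.
Import Order.TTheory GRing.Theory Num.Theory.
Local Open Scope ring_scope.
Local Open Scope classical_set_scope.
Set Implicit Arguments. Unset Strict Implicit. Unset Printing Implicit Defensive.

Section Polyhedra.
Variable R : realType.
Implicit Types k : nat.

Lemma dotv_is_linear k (a : 'rV[R]_k) : linear_for *%R (dotv a).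
Proof.
move=> c x y; rewrite /dotv mulr_sumr -big_split; apply: eq_bigr => i _.
by rewrite !mxE mulrDr mulrCA.
Qed.

HB.instance Definition _ k (a : 'rV[R]_k) :=
  GRing.isLinear.Build R 'rV[R]_k R _ (dotv a) (dotv_is_linear a).

Lemma dotvC k (a x : 'rV[R]_k) : dotv a x = dotv x a.
Proof. by apply: eq_bigr => i _; rewrite mulrC. Qed.

Lemma dotvZ k (a x : 'rV[R]_k) c : dotv a (c *: x) = c * dotv a x.
Proof. exact: linearZ_LR. Qed.

Lemma dotv_suml k I (r : seq I) (F : I -> 'rV[R]_k) x :
  dotv (\sum_(i <- r) F i) x = \sum_(i <- r) dotv (F i) x.
Proof. by rewrite dotvC raddf_sum; apply: eq_bigr => i _; rewrite dotvC. Qed.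

Lemma dotvNl k (a x : 'rV[R]_k) : dotv (- a) x = - dotv a x.
Proof. by rewrite dotvC raddfN dotvC. Qed.

Definition hpoly k (s : seq ('rV[R]_k * R)) : set 'rV[R]_k :=
  [set x | forall h, h \in s -> dotv h.1 x <= h.2].

Definition implicit_eq k (P : set 'rV[R]_k) (h : 'rV[R]_k * R) : Prop :=
  forall y, P y -> dotv h.1 y = h.2.

Lemma polyhedron_convex k (P : set 'rV[R]_k) p q t :
  polyhedron P -> P p -> P q -> 0 <= t -> t <= 1 -> P ((1 - t) *: p + t *: q).
Proof.
move=> [s ->] Pp Pq t0 t1 h hs; rewrite raddfD /= !dotvZ.
by have := Pp h hs; have := Pq h hs; nra.
Qed.

Lemma face_subset k (F P : set 'rV[R]_k) : face F P -> F `<=` P.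
Proof. by move=> [a [b [_ ->]]] x []. Qed.

Lemma hpoly_hyperplane k (s : seq ('rV[R]_k * R)) a b :
  hpoly s `&` [set x | dotv a x = b] = hpoly (s ++ [:: (a, b); (- a, - b)]).
Proof.
apply/seteqP; split => x /=.
  move=> [sx ax] h; rewrite mem_cat => /orP[/sx //|].
  by rewrite !inE => /orP[] /eqP -> /=; rewrite ?dotvNl ax.
move=> sx; split=> [h hs|]; first by apply: sx; rewrite mem_cat hs.
have := sx (a, b); have := sx (- a, - b).
rewrite /= dotvNl !mem_cat !inE !eqxx !orbT => /(_ isT) + /(_ isT); lra.
Qed.

Lemma dirD k (P : set 'rV[R]_k) u v : dir P u -> dir P v -> dir P (u + v).
Proof.
move=> [s1 [P1 ->]] [s2 [P2 ->]]; exists (s1 ++ s2); rewrite big_cat.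
by split=> // t; rewrite mem_cat => /orP[/P1|/P2].
Qed.

Lemma dirZ k (P : set 'rV[R]_k) c v : dir P v -> dir P (c *: v).
Proof.
move=> [s [Ps ->]]; exists [seq (c * t.1.1, t.1.2, t.2) | t <- s]; split.
  by move=> t /mapP[t' /Ps ? ->].
by rewrite big_map scaler_sumr; apply: eq_bigr => t _; rewrite scalerA.
Qed.

Lemma dir_diff k (P : set 'rV[R]_k) y z : P y -> P z -> dir P (y - z).
Proof.
move=> Py Pz; exists [:: (1, y, z)]; rewrite big_seq1 scale1r.
by split=> // t; rewrite inE => /eqP ->.
Qed.

Lemma implicit_eq_aff k (P : set 'rV[R]_k) h y :
  implicit_eq P h -> aff P y -> dotv h.1 y = h.2.
Proof.
move=> Ph [x [_ [Px [[s [Ps ->]] ->]]]].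
rewrite raddfD raddf_sum /= Ph // big_seq big1 ?addr0 // => t /Ps [P1 P2].
by rewrite dotvZ raddfB /= !Ph // subrr mulr0.
Qed.

Lemma sqdist_ge0 k (x y : 'rV[R]_k) : 0 <= sqdist x y.
Proof. by apply: sumr_ge0 => i _; apply: sqr_ge0. Qed.

Lemma sqdist_coord_le k (x y : 'rV[R]_k) i : (x 0 i - y 0 i) ^+ 2 <= sqdist x y.
Proof.
by rewrite /sqdist (bigD1 i) //= lerDl; apply: sumr_ge0 => j _; apply: sqr_ge0.
Qed.

Lemma sqdist_sub0 k (x y : 'rV[R]_k) : sqdist x y = sqdist (x - y) 0.
Proof. by apply: eq_bigr => i _; rewrite !mxE subr0. Qed.

Lemma sqdist_addZ k (x d : 'rV[R]_k) c : sqdist (x + c *: d) x = c ^+ 2 * sqdist d 0.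
Proof. by rewrite /sqdist mulr_sumr; apply: eq_bigr => i _; rewrite !mxE; ring. Qed.

Lemma dotv_lt_near k (a x : 'rV[R]_k) b : dotv a x < b ->
  exists2 e, 0 < e & forall y, sqdist y x < e -> dotv a y < b.
Proof.
move=> ax; set K := \sum_i `|a 0 i|; set d := (b - dotv a x) / (K + 1).
have K0 : 0 <= K by apply: sumr_ge0.
have d0 : 0 < d by rewrite divr_gt0 ?subr_gt0 // ltr_wpDl.
have Kd : K * d < b - dotv a x.
  by rewrite /d mulrA ltr_pdivrMr ?ltr_wpDl //; nra.
exists (d ^+ 2) => [|y yx]; first exact: exprn_gt0.
have yxd i : `|y 0 i - x 0 i| < d.
  have := le_lt_trans (sqdist_coord_le y x i) yx.
  by rewrite ltr_norml => ?; apply/andP; split; nra.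
have : dotv a (y - x) <= K * d.
  rewrite /dotv /K mulr_suml; apply: ler_sum => i _; rewrite !mxE.
  by rewrite (le_trans (ler_norm _)) // normrM ler_wpM2l // ltW.
by rewrite raddfB /=; lra.
Qed.

Lemma hpoly_strict_near k (s : seq ('rV[R]_k * R)) x :
  exists2 e, 0 < e & forall y, sqdist y x < e ->
    forall h, h \in s -> dotv h.1 x < h.2 -> dotv h.1 y < h.2.
Proof.
elim: s => [|h s [e e0 He]]; first by exists 1.
have [hx|hx] := ltP (dotv h.1 x) h.2; last first.
  exists e => // y yx h'; rewrite inE => /orP[/eqP -> |]; [lra | exact: He].
have [e' e'0 He'] := dotv_lt_near hx.
exists (Num.min e e') => [|y]; first by rewrite lt_min e0.
rewrite lt_min => /andP[ye ye'] h'; rewrite inE => /orP[/eqP -> _|]; last exact: He.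
exact: He'.
Qed.

Lemma relint_hpoly k (s : seq ('rV[R]_k * R)) p : hpoly s p ->
  (forall h, h \in s -> dotv h.1 p < h.2 \/ implicit_eq (hpoly s) h) ->
  relint (hpoly s) p.
Proof.
move=> sp strict_or_implicit; split=> //.
have [e e0 He] := hpoly_strict_near s p.
exists e; split=> // y affy yp h hs.
have [/(He y yp h hs)/ltW //|hI] := strict_or_implicit h hs.
by rewrite (implicit_eq_aff hI affy).
Qed.

(* Halving towards a point where h is strict keeps h strict and keeps strict
   every constraint that was strict before. *)
Lemma exists_strict_or_implicit k (P : set 'rV[R]_k) (s : seq ('rV[R]_k * R)) :
  polyhedron P -> P !=set0 -> (forall h, h \in s -> forall y, P y -> dotv h.1 y <= h.2) ->
  exists2 p, P p & forall h, h \in s -> dotv h.1 p < h.2 \/ implicit_eq P h.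
Proof.
move=> PP [p0 Pp0]; elim: s => [|h s IH] valid; first by exists p0.
have valid_s h' : h' \in s -> forall y, P y -> dotv h'.1 y <= h'.2.
  by move=> hs; apply: valid; rewrite inE hs orbT.
have [p Pp Hp] := IH valid_s.
have hP := valid h (mem_head _ _).
have [hI|] := pselect (implicit_eq P h).
  by exists p => // h'; rewrite inE => /orP[/eqP -> |/Hp]; [right|].
move=> /existsNP[q /not_implyP[Pq /eqP hq]].
have {}hq : dotv h.1 q < h.2 by rewrite lt_neqAle hq hP.
exists ((1 - 2^-1) *: p + 2^-1 *: q); first by apply: polyhedron_convex => //; lra.
move=> h'; rewrite inE => /orP[/eqP -> |hs]; rewrite raddfD /= !dotvZ.
  by left; have := hP p Pp; lra.
have := valid_s h' hs q Pq.
by case: (Hp h' hs) => [|?]; [left; lra | right].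
Qed.

Lemma polyhedron_relint_neq0 k (P : set 'rV[R]_k) :
  polyhedron P -> P !=set0 -> relint P !=set0.
Proof.
move=> PP P0; have [s PE] := PP; subst P.
have [|p sp Hp] := exists_strict_or_implicit (s := s) PP P0; last first.
  by exists p; apply: relint_hpoly.
by move=> h hs y /(_ h hs).
Qed.

Lemma relint_add_dir k (P : set 'rV[R]_k) x u : relint P x -> dir P u ->
  exists2 e, 0 < e & forall c, 0 < c -> c <= e -> P (x + c *: u).
Proof.
move=> [Px [e [e0 He]]] Pu; set Q := sqdist u 0.
have Q0 : 0 <= Q by apply: sqdist_ge0.
exists (Num.min 1 (e / (Q + 1))) => [|c c0].
  by rewrite lt_min ltr01 divr_gt0 ?ltr_wpDl.
rewrite le_min ler_pdivlMr ?ltr_wpDl // => /andP[c1 ce].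
apply: He; first by exists x, (c *: u); do !split=> //; apply: dirZ.
by rewrite sqdist_addZ -/Q; nra.
Qed.

(* The point y of aff P near (1 - t) p + t q is (1 - t) p + t y', where y' is
   a point of aff P near q, hence in P. *)
Lemma relint_convex k (P : set 'rV[R]_k) p q t : polyhedron P -> P p ->
  relint P q -> 0 < t -> t <= 1 -> relint P ((1 - t) *: p + t *: q).
Proof.
move=> PP Pp [Pq [e [e0 He]]] t0 t1.
set r := (1 - t) *: p + t *: q.
have Pr : P r by apply: polyhedron_convex => //; lra.
split=> //; exists (t ^+ 2 * e); split=> [|_ [x [v [Px [Pv ->]]]] yr].
  by rewrite mulr_gt0 ?exprn_gt0.
set y' := q + t^-1 *: (x + v - r).
have Py' : P y'.
  apply: He; last first.
    by rewrite sqdist_addZ -sqdist_sub0 exprVn mulrC ltr_pdivrMr ?exprn_gt0 // mulrC.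
  exists q, (t^-1 *: (x + v - r)); do !split=> //.
  by apply: dirZ; rewrite addrAC; apply: dirD => //; apply: dir_diff.
have -> : x + v = (1 - t) *: p + t *: y'.
  by apply/rowP => j; rewrite /y' /r !mxE; field; lra.
by apply: polyhedron_convex => //; lra.
Qed.

(* The face cut out by the sum of the constraints active at p: on it, every
   constraint active at p becomes an implicit equality. *)
Lemma relint_face k (D : set 'rV[R]_k) p : polyhedron D -> D p ->
  exists2 F, face F D & relint F p.
Proof.
move=> [s ->] Dp; set act := [seq h <- s | dotv h.1 p == h.2].
set a := \sum_(h <- act) h.1; set b := \sum_(h <- act) h.2.
have slack_ge0 h y : h \in act -> hpoly s y -> 0 <= h.2 - dotv h.1 y.
  by rewrite mem_filter subr_ge0 => /andP[_ hs] /(_ h hs).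
have aE y : b - dotv a y = \sum_(h <- act) (h.2 - dotv h.1 y).
  by rewrite sumrB dotv_suml.
have ab y : hpoly s y -> dotv a y <= b.
  by move=> sy; rewrite -subr_ge0 aE big_seq sumr_ge0 // => h /slack_ge0; apply.
exists (hpoly s `&` [set y | dotv a y = b]); first by exists a, b.
rewrite hpoly_hyperplane; apply: relint_hpoly.
  rewrite -hpoly_hyperplane; split=> //.
  apply/eqP; rewrite eq_sym -subr_eq0 aE big_seq big1 // => h.
  by rewrite mem_filter => /andP[/eqP -> _]; rewrite subrr.
move=> h; rewrite -hpoly_hyperplane mem_cat => /orP[hs|].
  have [hp|hp] := ltP (dotv h.1 p) h.2; [by left | right => y [sy ay]].
  have hact : h \in act by rewrite mem_filter hs eq_le hp Dp.
  have /eqP := aE y; rewrite ay subrr eq_sym big_seq psumr_eq0; last first.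
    by move=> ? /slack_ge0; apply.
  by move=> /allP /(_ h hact); rewrite hact subr_eq0 => /eqP.
by rewrite !inE => /orP[] /eqP -> /=; right=> y [_ ay]; rewrite ?dotvNl ay.
Qed.

Lemma affine_combination m n (A : 'M[R]_(m, n)) b (p q : 'rV[R]_m) t :
  ((1 - t) *: p + t *: q) *m A + b = (1 - t) *: (p *m A + b) + t *: (q *m A + b).
Proof. by rewrite mulmxDl -!scalemxAl !scalerDr addrACA -scalerDl subrK scale1r. Qed.

Lemma relint_meet_affine m n (P P' : set 'rV[R]_m) (Q Q' : set 'rV[R]_n)
    (A : 'M[R]_(m, n)) b x y0 z0 u v :
  polyhedron P' -> polyhedron Q' -> P `<=` P' -> Q `<=` Q' ->
  relint P x -> relint Q (x *m A + b) -> relint P' y0 -> relint Q' z0 ->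
  dir P u -> dir Q v -> z0 = y0 *m A + b + (u *m A + v) ->
  exists2 p, relint P' p & relint Q' (p *m A + b).
Proof.
move=> polyP' polyQ' sPP' sQQ' Px Qfx P'y0 Q'z0 Pu Qv z0E.
have [e1 e1_gt0 He1] := relint_add_dir Px Pu.
have [e2 e2_gt0 He2] := relint_add_dir Qfx (dirZ (-1) Qv).
set c := Num.min e1 e2; have c0 : 0 < c by rewrite lt_min e1_gt0.
have Pxc : P (x + c *: u) by apply: He1; rewrite ?ge_min ?lexx.
have Qfxc : Q (x *m A + b + c *: (-1 *: v)) by apply: He2; rewrite ?ge_min ?lexx ?orbT.
set t := c / (1 + c); have t0 : 0 < t by rewrite divr_gt0 ?ltr_wpDl.
have t1 : t <= 1 by rewrite ler_pdivrMr ?ltr_wpDl // mul1r lerDr ltW.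
exists ((1 - t) *: (x + c *: u) + t *: y0).
  by apply: relint_convex => //; apply: sPP'.
have -> : ((1 - t) *: (x + c *: u) + t *: y0) *m A + b
        = (1 - t) *: (x *m A + b + c *: (-1 *: v)) + t *: z0.
  rewrite affine_combination z0E mulmxDl -scalemxAl.
  by apply/rowP => j; rewrite !mxE /t; field; rewrite gt_eqF ?ltr_wpDl.
by apply: relint_convex => //; apply: sQQ'.
Qed.

End Polyhedra.

Theorem lemma17 (R : realType) (m n : nat)
    (M : set (set 'rV[R]_m)) (N : set (set 'rV[R]_n))
    (f : 'rV[R]_m -> 'rV[R]_n) :
  polyhedral_complex M ->
  polyhedral_complex N ->
  affine_on_cells M f ->
  (forall D, N D -> transverse_on_cells M f D) ->
  forall C C' D D',
    M C -> M C' -> face C C' ->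
    N D -> N D' -> face D D' ->
    (f @` relint C) `&` D !=set0 ->
    (f @` relint C') `&` relint D' !=set0.
Proof.
move=> [_ [Mpoly _]] [_ [Npoly [Nface _]]] f_aff f_tr C C' D D' MC MC' CC'
  ND ND' DD' [_ [[x Cx <-] Dfx]].
have [F FD Ffx] := relint_face (Npoly D ND) Dfx.
have NF : N F by apply: (Nface D F ND FD); exists (f x); exact: Ffx.1.
have [A [b fE]] := f_aff C' MC'.
have fEC y : C y -> f y = y *m A + b by move=> /(face_subset CC'); apply: fE.
have [y0 C'y0] :=
  polyhedron_relint_neq0 (Mpoly C' MC') (ex_intro _ x (face_subset CC' Cx.1)).
have [z0 D'z0] :=
  polyhedron_relint_neq0 (Npoly D' ND') (ex_intro _ _ (face_subset DD' Dfx)).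
have [u [v [Cu [Fv uvE]]]] := f_tr F NF C MC x Cx Ffx A b fEC (z0 - (y0 *m A + b)).
have z0E : z0 = y0 *m A + b + (u *m A + v) by rewrite -uvE addrC subrK.
have Ffx' : relint F (x *m A + b) by rewrite -fEC //; exact: Cx.1.
have [p C'p D'fp] := relint_meet_affine (Mpoly C' MC') (Npoly D' ND')
  (face_subset CC') (subset_trans (face_subset FD) (face_subset DD'))
  Cx Ffx' C'y0 D'z0 Cu Fv z0E.
by exists (f p); split; [exists p | rewrite (fE p C'p.1)].
Qed.
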